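(* Let $\mathcal{F}\subseteq\mathcal{P}(\omega)$ be a free filter. Assume that $h\colon Q\to Q$ is a homeomorphism of $Q=[-1,1]^\omega$ such that for every $x\in Q$, $x-h(x)\in C_\mathcal{F}$. Then $h[K_\mathcal{F}]=K_\mathcal{F}$.
   Context: A filter on $\omega$ is free if it contains all cofinite sets. $Q=[-1,1]^\omega$ is the Hilbert cube with the product topology and $Q^\circ=(-1,1)^\omega$ its pseudointerior. $K_\mathcal{F}=\{f\in Q:\forall m\in\omega\ \{n\in\omega:|f(n)|<2^{-m}\}\in\mathcal{F}\}$ and $C_\mathcal{F}=K_\mathcal{F}\cap Q^\circ$. The difference $x-h(x)$ is taken coordinatewise. *)

From HB Require Import structures.
From mathcomp Require Import all_boot all_order all_algebra.
From mathcomp Require Import all_classical all_reals all_analysis.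
Unset Printing Implicit Defensive.
Import Order.TTheory GRing.Theory Num.Theory.
Import numFieldNormedType.Exports.
Local Open Scope classical_set_scope.
Local Open Scope ring_scope.

Notation Romega R := {ptws nat -> R}.

Definition hilbQ (R : realType) : set (Romega R) :=
  [set f | forall n, -1 <= f n <= 1].

Definition pseudoint (R : realType) : set (Romega R) :=
  [set f | forall n, -1 < f n < 1].

Definition free_filter (F : set_system nat) : Prop :=
  @frechet_filter nat `<=` F.

Definition K_F (R : realType) (F : set_system nat) : set (Romega R) :=
  [set f | hilbQ R f /\
     forall m : nat, F [set n | `|f n| < (2%:R ^- m : R)]].

Definition C_F (R : realType) (F : set_system nat) : set (Romega R) :=
  K_F R F `&` pseudoint R.

Definition homeomorphism_of (R : realType) (A : set (Romega R))
    (h : Romega R -> Romega R) : Prop :=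
  exists g : Romega R -> Romega R,
    [/\ h @` A `<=` A, g @` A `<=` A,
        (forall x, A x -> g (h x) = x) & (forall y, A y -> h (g y) = y)] /\
    {within A, continuous h} /\ {within A, continuous g}.

From HB Require Import structures.
From mathcomp Require Import all_boot all_order all_algebra.
From mathcomp Require Import all_classical all_reals all_analysis.
Import Order.TTheory GRing.Theory Num.Theory.
Import numFieldNormedType.Exports.
Local Open Scope classical_set_scope.
Local Open Scope ring_scope.

(* K_F consists of the points of Q that tend to 0 along F, and such sequences
   form an additive group.  Hence if x - h(x) tends to 0 along F, then x does
   iff h(x) does; applied to x and to h^-1(y) this gives both inclusions. *)

Definition F_null {R : realType} (F : set_system nat) (f : nat -> R) : Prop :=
  forall m : nat, F [set n | `|f n| < 2%:R ^- m].

Lemma normD_lt_expV2 (R : realType) (m : nat) (a b : R) :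
  `|a| < 2%:R ^- m.+1 -> `|b| < 2%:R ^- m.+1 -> `|a + b| < 2%:R ^- m.
Proof.
rewrite exprSr invfM => ha hb.
apply: le_lt_trans (ler_normD a b) _.
by rewrite [X in _ < X]splitr ltrD.
Qed.

Section FNull.
Variables (R : realType) (F : set_system nat).
Hypothesis FF : Filter F.

Lemma F_nullD {f g : nat -> R} :
  F_null F f -> F_null F g -> F_null F (fun n => f n + g n).
Proof.
move=> f0 g0 m; apply: filterS2 (f0 m.+1) (g0 m.+1) => n.
exact: normD_lt_expV2.
Qed.

Lemma F_nullN {f : nat -> R} : F_null F f -> F_null F (fun n => - f n).
Proof. by move=> f0 m; apply: filterS (f0 m) => n /=; rewrite normrN. Qed.

Lemma F_null_subr (f g : nat -> R) :
  F_null F (fun n => f n - g n) -> F_null F f -> F_null F g.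
Proof.
move=> fg0 f0; have -> : g = (fun n => f n - (f n - g n)).
  by apply/funext => n; rewrite opprB addrC subrK.
exact: F_nullD f0 (F_nullN fg0).
Qed.

Lemma F_null_subl (f g : nat -> R) :
  F_null F (fun n => f n - g n) -> F_null F g -> F_null F f.
Proof.
move=> fg0 g0; have -> : f = (fun n => g n + (f n - g n)).
  by apply/funext => n; rewrite addrC subrK.
exact: F_nullD g0 fg0.
Qed.

End FNull.

Theorem mainTheorem10 (R : realType) (F : set_system nat)
    (FF : ProperFilter F) (Ffree : free_filter F)
    (h : Romega R -> Romega R)
    (hhom : homeomorphism_of R (hilbQ R) h)
    (hdiff : forall x : Romega R, hilbQ R x ->
        C_F R F (fun n => x n - h x n)) :
  h @` K_F R F = K_F R F.
Proof.
case: hhom => g [[hQ gQ gh hg] _].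
have diff_null x : hilbQ R x -> F_null F (fun n => x n - h x n).
  by case/hdiff => -[].
apply/seteqP; split=> [_ [x [xQ x0] <-] | y [yQ y0]].
- split; first by apply: hQ; exists x.
  exact: F_null_subr (diff_null x xQ) x0.
- have gyQ : hilbQ R (g y) by apply: gQ; exists y.
  exists (g y); last exact: hg.
  split=> //; apply: F_null_subl (diff_null _ gyQ) _.
  by rewrite hg.
Qed.
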